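(* Let $S$ be a nonempty subset of $\mathbb{Z}$ and $\mathcal{T}\subseteq\mathbb{N}$. Then for all integers $0\le\ell\le k<|S|$, the generalized binomial coefficient $\binom{k}{\ell}_{S,\mathcal{T}}:=\dfrac{k!_{S,\mathcal{T}}}{\ell!_{S,\mathcal{T}}\,(k-\ell)!_{S,\mathcal{T}}}$ is a positive integer.
   Context: $\mathbb{N}=\{0,1,2,\dots\}$. For an integer $b\ge0$ and $a\in\mathbb{Z}$ define $\operatorname{ord}_b(a):=\sup\{k\in\mathbb{N}: a\mathbb{Z}\subseteq b^k\mathbb{Z}\}$ (convention $0^0=1$); thus for $b\ge2$ it is the largest $k$ with $b^k\mid a$ ($+\infty$ for $a=0$), $\operatorname{ord}_0(a)=+\infty$ if $a=0$ and $0$ otherwise, and $\operatorname{ord}_1(a)=+\infty$. For nonempty $S\subseteq\mathbb{Z}$, a $b$-ordering of $S$ is a sequence $(a_i)_{i\ge0}$ in $S$ such that for each $i\ge1$, $a_i$ attains $\min_{a'\in S}\sum_{j=0}^{i-1}\operatorname{ord}_b(a'-a_j)$; the $b$-exponent sequence is $\alpha_k(S,b):=\sum_{j=0}^{k-1}\operatorname{ord}_b(a_k-a_j)$ for any $b$-ordering (independent of the choice). For $\mathcal{T}\subseteq\mathbb{N}$ the generalized factorial is $k!_{S,\mathcal{T}}:=\prod_{b\in\mathcal{T}}b^{\alpha_k(S,b)}$, with conventions $b^{+\infty}=0$ for $b=0$ and $b\ge2$, $1^{+\infty}=1$, and $b^0=1$ for all $b\in\mathbb{N}$. *)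

From mathcomp Require Import all_boot all_order all_algebra.
From Stdlib Require Import ClassicalEpsilon.
Set Implicit Arguments. Unset Strict Implicit. Unset Printing Implicit Defensive.
Import Order.TTheory GRing.Theory Num.Theory.

(* Extended naturals N ∪ {+oo}: [Some n] = n, [None] = +oo. *)
Definition enat := option nat.

Definition eadd (x y : enat) : enat :=
  match x, y with Some m, Some n => Some (m + n)%N | _, _ => None end.

Definition ele (x y : enat) : Prop :=
  match x, y with
  | _, None => True
  | None, Some _ => False
  | Some m, Some n => (m <= n)%N
  end.

(* ord_b(a) = sup { k in N : a Z ⊆ b^k Z } = sup { k : b^k | a }  (0^0 = 1).
   If the set is unbounded the sup is +oo; otherwise it is its maximum,
   which (for a <> 0) lies below |a|+1. *)
Definition ordb (b : nat) (a : int) : enat :=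
  if excluded_middle_informative (forall k : nat, ((b ^ k)%:Z %| a)%Z)
  then None
  else Some (\max_(k < `|a|%N.+1 | ((b ^ k)%:Z %| a)%Z) k)%N.

Definition ordsum (b : nat) (a : nat -> int) (i : nat) (x : int) : enat :=
  foldr eadd (Some 0%N) [seq ordb b (x - a j)%R | j <- iota 0 i].

Definition is_bordering (S : int -> Prop) (b : nat) (a : nat -> int) : Prop :=
  (forall i, S (a i)) /\
  (forall i, (0 < i)%N -> forall x, S x -> ele (ordsum b a i (a i)) (ordsum b a i x)).

Definition some_bordering (S : int -> Prop) (b : nat) : nat -> int :=
  epsilon (inhabits (fun _ => 0%R)) (is_bordering S b).

Definition alpha (S : int -> Prop) (b k : nat) : enat :=
  let a := some_bordering S b in ordsum b a k (a k).

Definition epow (b : nat) (x : enat) : nat :=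
  match x with Some n => (b ^ n)%N | None => if b == 1%N then 1%N else 0%N end.

Definition gfact_term (S : int -> Prop) (T : nat -> Prop) (k b : nat) : nat :=
  if excluded_middle_informative (T b) then epow b (alpha S b k) else 1%N.

Definition fin_supp (S : int -> Prop) (T : nat -> Prop) (k : nat) : Prop :=
  exists N : nat, forall b : nat, (N <= b)%N -> gfact_term S T k b = 1%N.

(* k!_{S,T} = prod_{b in T} b^{alpha_k(S,b)}; the (possibly infinite) product
   is the finite product when only finitely many factors differ from 1, and
   is set to 0 (junk; never a positive integer) otherwise. *)
Definition gfact (S : int -> Prop) (T : nat -> Prop) (k : nat) : nat :=
  match excluded_middle_informative (fin_supp S T k) with
  | left _ =>
      let N := epsilon (inhabits 0%N)
                 (fun N => forall b, (N <= b)%N -> gfact_term S T k b = 1%N) in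
      (\prod_(b < N) gfact_term S T k b)%N
  | right _ => 0%N
  end.

(* k < |S| : S has at least k+1 distinct elements *)
Definition lt_card (k : nat) (S : int -> Prop) : Prop :=
  exists s : seq int, uniq s /\ size s = k.+1 /\ (forall x, x \in s -> S x).

From mathcomp Require Import all_boot all_order all_algebra.
From mathcomp Require Import zify ring.
From Stdlib Require Import ClassicalEpsilon Classical.
Set Implicit Arguments. Unset Strict Implicit. Unset Printing Implicit Defensive.
Import Order.TTheory GRing.Theory Num.Theory.

(** Fix k+1 distinct elements s0 of S. For b = 0, and for b larger than twice
    every |x| with x in s0, some element of s0 is incongruent mod b to all of the
    first j <= k terms of a b-ordering, so alpha_j(S,b) = 0; for b = 1 the factor is 1.
    Hence the factorials are finite products, and it suffices to show
    alpha_l + alpha_m <= alpha_(l+m) for b >= 2.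

    Let v be the exponent sequence of a b-ordering (it is nondecreasing) and
    N(t) the number of its terms below t, so that v_j >= t iff N(t) <= j; the
    inequality follows from the subadditivity N(a + c) <= N(a) + N(c). The terms
    of a b-ordering lying in a residue class r mod b form a b-ordering of that
    class, and writing them as r + b z their exponents become i + u_i, where u is
    the exponent sequence of a b-ordering of the rescaled class. Subadditivity for
    u, by induction on a + c, gives it for each class, and summing over the
    classes gives it for v. *)

Definition eleb (x y : enat) : bool :=
  match x, y with
  | _, None => true
  | None, Some _ => false
  | Some m, Some n => (m <= n)%N
  end.

Lemma eleP x y : ele x y <-> eleb x y.
Proof. by case: x => [m|]; case: y => [n|]. Qed.

Lemma eleb_trans : transitive eleb.
Proof. by move=> [n|] [m|] [p|] //=; apply: leq_trans. Qed.

Lemma eaddC : commutative eadd.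
Proof. by move=> [m|] [n|] //=; rewrite addnC. Qed.

Lemma eaddA : associative eadd.
Proof. by move=> [m|] [n|] [p|] //=; rewrite addnA. Qed.

Lemma add0e : left_id (Some 0%N) eadd.
Proof. by case. Qed.

Lemma eleb_eaddr x y : eleb x (eadd x y).
Proof. by case: x => [m|]; case: y => [n|] //=; rewrite leq_addr. Qed.

Lemma ele_eadd2l n x y : ele (eadd (Some n) x) (eadd (Some n) y) -> ele x y.
Proof. by case: x => [p|]; case: y => [q|] //=; rewrite leq_add2l. Qed.

Lemma eadd_Some1S x n y :
  eadd (eadd (Some 1%N) x) (eadd (Some n) y) = eadd (Some n.+1) (eadd x y).
Proof. by case: x => [p|]; case: y => [q|] //=; rewrite add1n addSn addnCA. Qed.

Lemma ordb0 b : ordb b 0 = None.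
Proof. by rewrite /ordb; case: excluded_middle_informative. Qed.

Lemma ordb_val b a n : (1 < b)%N ->
  (b ^ n %| `|a|)%N -> ~~ (b ^ n.+1 %| `|a|)%N -> ordb b a = Some n.
Proof.
move=> b_gt1 dvd_n ndvd_Sn; have a_gt0 : (0 < `|a|)%N.
  by rewrite lt0n; apply: contraNneq ndvd_Sn => ->; apply: dvdn0.
have le_n_a : (n <= `|a|)%N.
  exact: leq_trans (ltnW (ltn_expl n b_gt1)) (dvdn_leq a_gt0 dvd_n).
rewrite /ordb; case: excluded_middle_informative => [all_dvd|not_all].
  by move: (all_dvd n.+1); rewrite dvdzE (negbTE ndvd_Sn).
congr Some; apply/eqP; rewrite eqn_leq; apply/andP; split.
  apply/bigmax_leqP => i; rewrite dvdzE => dvd_i; rewrite leqNgt.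
  by apply: contra ndvd_Sn => lt_n_i; apply: dvdn_trans dvd_i; apply: dvdn_exp2l.
by apply: (leq_bigmax_cond (Ordinal (le_n_a : (n < `|a|.+1)%N))); rewrite /= dvdzE.
Qed.

Lemma ordb_ndvd b a : ~~ (b%:Z %| a)%Z -> ordb b a = Some 0%N.
Proof.
rewrite /ordb; case: excluded_middle_informative => [all_dvd|not_all ndvd].
  by move: (all_dvd 1%N); rewrite expn1 => ->.
congr Some; apply/eqP; rewrite -leqn0; apply/bigmax_leqP => -[[|i] _] //=.
move=> dvd_Si; move: ndvd; rewrite -topredE /= !dvdzE in dvd_Si *.
by rewrite (dvdn_trans _ dvd_Si) // -{1}(expn1 b) dvdn_exp2l.
Qed.

Lemma exists_valuation b d : (1 < b)%N -> (0 < d)%N ->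
  exists n, (b ^ n %| d)%N /\ ~~ (b ^ n.+1 %| d)%N.
Proof.
move=> b_gt1 d_gt0; have ex0 : exists n, (b ^ n %| d)%N by exists 0%N; rewrite dvd1n.
have bounded n : (b ^ n %| d)%N -> (n <= d)%N.
  by move=> /(dvdn_leq d_gt0); apply: leq_trans (ltnW (ltn_expl n b_gt1)).
have [n dvd_n max_n] := ex_maxnP ex0 bounded; exists n; split=> //.
by apply/negP => /max_n; rewrite ltnn.
Qed.

Lemma ordb_finite b a : (1 < b)%N -> a != 0%R -> exists n, ordb b a = Some n.
Proof.
move=> b_gt1 a_neq0; have a_gt0 : (0 < `|a|)%N by rewrite absz_gt0.
have [n [dvd_n ndvd_Sn]] := exists_valuation b_gt1 a_gt0.
by exists n; apply: ordb_val.
Qed.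

Lemma ordbMl b d : (1 < b)%N -> ordb b (b%:Z * d)%R = eadd (Some 1%N) (ordb b d).
Proof.
move=> b_gt1; have [->|d_neq0] := eqVneq d 0%R; first by rewrite mulr0 ordb0.
have d_gt0 : (0 < `|d|)%N by rewrite absz_gt0.
have [n [dvd_n ndvd_Sn]] := exists_valuation b_gt1 d_gt0.
have b_gt0 := ltnW b_gt1.
rewrite (ordb_val b_gt1 dvd_n ndvd_Sn) (@ordb_val _ _ n.+1) // abszM expnS dvdn_pmul2l //.
Qed.

Definition ordsum_seq (b : nat) (s : seq int) (x : int) : enat :=
  foldr eadd (Some 0%N) [seq ordb b (x - y)%R | y <- s].

Lemma ordsumE b a i x : ordsum b a i x = ordsum_seq b (mkseq a i) x.
Proof. by rewrite /ordsum /ordsum_seq /mkseq -map_comp. Qed.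

Lemma ordsum_seq_cons b y s x :
  ordsum_seq b (y :: s) x = eadd (ordb b (x - y)%R) (ordsum_seq b s x).
Proof. by []. Qed.

Lemma ordsum_seq_cat b s1 s2 x :
  ordsum_seq b (s1 ++ s2) x = eadd (ordsum_seq b s1 x) (ordsum_seq b s2 x).
Proof.
elim: s1 => [|y s1 IH]; first by rewrite add0e.
by rewrite cat_cons !ordsum_seq_cons IH eaddA.
Qed.

Lemma ordsum_seq_rcons b s y x :
  ordsum_seq b (rcons s y) x = eadd (ordsum_seq b s x) (ordb b (x - y)%R).
Proof. by rewrite -cats1 ordsum_seq_cat ordsum_seq_cons [eadd _ (ordsum_seq _ _ _)]eaddC add0e. Qed.

Lemma ordsum_seq_finite b s x :
  {in s, forall y, exists n, ordb b (x - y)%R = Some n} ->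
  exists n, ordsum_seq b s x = Some n.
Proof.
elim: s => [|y s IH] fin_s; first by exists 0%N.
rewrite ordsum_seq_cons; have [n ->] := fin_s y (mem_head _ _).
have [m ->] : exists m, ordsum_seq b s x = Some m.
  by apply: IH => z z_s; apply: fin_s; rewrite inE z_s orbT.
by exists (n + m)%N.
Qed.

Lemma ordsum_seq_eq0 b s x :
  {in s, forall y, ordb b (x - y)%R = Some 0%N} -> ordsum_seq b s x = Some 0%N.
Proof.
elim: s => [|y s IH] zero_s //; rewrite ordsum_seq_cons zero_s ?mem_head // IH //.
by move=> z z_s; apply: zero_s; rewrite inE z_s orbT.
Qed.

Definition in_residue (b : nat) (r : int) : pred int := fun y => (y %% b)%Z == r.

Lemma ordsum_seq_residue b s x :
  ordsum_seq b s x = ordsum_seq b (filter (in_residue b (x %% b)%Z) s) x.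
Proof.
elim: s => [|y s IH] //=; rewrite /in_residue; case: ifP => y_res.
  by rewrite !ordsum_seq_cons IH.
by rewrite ordsum_seq_cons IH ordb_ndvd ?add0e // -eqz_mod_dvd eq_sym y_res.
Qed.

Lemma subz_eqmod (b : nat) (x y : int) : (x %% b)%Z = (y %% b)%Z ->
  (x - y = b%:Z * ((x %/ b)%Z - (y %/ b)%Z))%R.
Proof. by move=> eq_mod; rewrite {1}(divz_eq x b) {1}(divz_eq y b) eq_mod; ring. Qed.

Lemma ordsum_seq_divz b s x : (1 < b)%N ->
  {in s, forall y, (y %% b)%Z = (x %% b)%Z} ->
  ordsum_seq b s x =
  eadd (Some (size s)) (ordsum_seq b [seq (y %/ b)%Z | y <- s] (x %/ b)%Z).
Proof.
move=> b_gt1; elim: s => [|y s IH] same_res //.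
rewrite [LHS]ordsum_seq_cons IH; last by move=> z z_s; apply: same_res; rewrite inE z_s orbT.
by rewrite (@subz_eqmod b) ?same_res ?mem_head // ordbMl // eadd_Some1S.
Qed.

(** [s] continues a b-ordering of [S] whose first terms are [pre]. *)
Fixpoint is_greedy (b : nat) (S : int -> Prop) (pre s : seq int) : Prop :=
  if s is x :: s' then
    (S x /\ forall y, S y -> ele (ordsum_seq b pre x) (ordsum_seq b pre y)) /\
    is_greedy b S (rcons pre x) s'
  else True.

Fixpoint exponents (b : nat) (pre s : seq int) : seq enat :=
  if s is x :: s' then ordsum_seq b pre x :: exponents b (rcons pre x) s' else [::].

Lemma size_exponents b pre s : size (exponents b pre s) = size s.
Proof. by elim: s pre => [|x s IH] pre //=; rewrite IH. Qed.

Lemma nth_exponents b pre s i : (i < size s)%N ->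
  nth None (exponents b pre s) i = ordsum_seq b (pre ++ take i s) (nth 0%R s i).
Proof.
elim: s pre i => [|x s IH] pre [|i] //=; first by rewrite cats0.
by move=> lt_i_s; rewrite IH // cat_rcons.
Qed.

Lemma exponents_sorted b S pre s : is_greedy b S pre s -> sorted eleb (exponents b pre s).
Proof.
elim: s pre => [|x [|y s] IH] pre //= [[_ x_min] greedy_s].
have /= -> := IH _ greedy_s; rewrite andbT ordsum_seq_rcons.
apply: eleb_trans (eleb_eaddr _ _); apply/eleP; apply: x_min.
by case: greedy_s => -[].
Qed.

Lemma count_exponents_residue b (P : pred enat) pre s : (0 < b)%N ->
  count P (exponents b pre s) =
  (\sum_(r < b) count P (exponents b (filter (in_residue b r) pre)
                                     (filter (in_residue b r) s)))%N.
Proof.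
move=> b_gt0; elim: s pre => [|x s IH] pre /=; first by rewrite big1.
have [r0 r0E] : exists r0 : 'I_b, Posz r0 = (x %% b)%Z.
  have mod_ge0 : (0 <= (x %% b)%Z)%R by rewrite modz_ge0 // -lt0n.
  have lt_mod_b : (`|(x %% b)%Z| < b)%N by rewrite -ltz_nat gez0_abs // ltz_pmod.
  by exists (Ordinal lt_mod_b); rewrite /= gez0_abs.
have step (r : 'I_b) :
    count P (exponents b (filter (in_residue b r) pre) (filter (in_residue b r) (x :: s))) =
    ((if r == r0 then nat_of_bool (P (ordsum_seq b pre x)) else 0) +
     count P (exponents b (filter (in_residue b r) (rcons pre x))
                          (filter (in_residue b r) s)))%N.
  rewrite /= filter_rcons /in_residue; case: (eqVneq r r0) => [->|neq_r] /=.
    by rewrite r0E eqxx /= [in RHS]ordsum_seq_residue.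
  by rewrite -r0E eqz_nat eq_sym (negbTE (neq_r : (r : nat) != r0)).
by rewrite (eq_bigr _ (fun r _ => step r)) big_split /= -big_mkcond big_pred1_eq IH.
Qed.

Lemma greedy_residue b S r pre s : is_greedy b S pre s ->
  is_greedy b (fun y => S y /\ (y %% b)%Z = r)
    (filter (in_residue b r) pre) (filter (in_residue b r) s).
Proof.
have sum_res pre' z : (z %% b)%Z = r ->
    ordsum_seq b (filter (in_residue b r) pre') z = ordsum_seq b pre' z.
  by move=> z_r; rewrite [RHS]ordsum_seq_residue z_r.
elim: s pre => [|x s IH] pre //= [[Sx x_min] greedy_s].
have := IH _ greedy_s; rewrite filter_rcons; case: ifP => // /eqP x_r.
by do !split=> //; move=> y [Sy y_r]; rewrite !sum_res //; apply: x_min.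
Qed.

Lemma greedy_divz b S (r : nat) pre s : (1 < b)%N -> (r < b)%N ->
  {in pre, forall y, (y %% b)%Z = r} ->
  is_greedy b (fun y => S y /\ (y %% b)%Z = r) pre s ->
  is_greedy b (fun z => S (z * b%:Z + r%:Z)%R)
    [seq (y %/ b)%Z | y <- pre] [seq (y %/ b)%Z | y <- s].
Proof.
move=> b_gt1 lt_r_b.
elim: s pre => [|x s IH] pre pre_r //= [[[Sx x_r] x_min] greedy_s].
split; first split.
- by rewrite -x_r -divz_eq.
- move=> z Sz.
  have lift_r : ((z * b%:Z + r%:Z) %% b)%Z = r.
    by rewrite modzMDl modz_small // ltz_nat lt_r_b.
  have lift_q : ((z * b%:Z + r%:Z) %/ b)%Z = z.
    by rewrite divzMDl -?lt0n ?(ltnW b_gt1) // divz_small ?addr0 // ltz_nat lt_r_b.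
  have := x_min _ (conj Sz lift_r).
  rewrite (@ordsum_seq_divz _ _ x) //; last by move=> y /pre_r ->.
  rewrite (@ordsum_seq_divz _ _ (z * b%:Z + r%:Z)%R) //; last by move=> y /pre_r ->.
  by rewrite lift_q; apply: ele_eadd2l.
- rewrite -map_rcons; apply: IH => // y; rewrite mem_rcons inE => /predU1P[->|/pre_r] //.
Qed.

Lemma nth_exponents_divz b (r : int) s i : (1 < b)%N ->
  {in s, forall y, (y %% b)%Z = r} -> (i < size s)%N ->
  nth None (exponents b [::] s) i =
  eadd (Some i) (nth None (exponents b [::] [seq (y %/ b)%Z | y <- s]) i).
Proof.
move=> b_gt1 s_r lt_i_s; rewrite !nth_exponents ?size_map //= -map_take (nth_map 0%R) //.
have take_r : {in take i s, forall y, (y %% b)%Z = (nth 0%R s i %% b)%Z}.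
  by move=> y /mem_take y_s; rewrite !s_r ?mem_nth.
by rewrite ordsum_seq_divz // size_take lt_i_s.
Qed.

Definition below (t : nat) (e : enat) : bool := if e is Some m then (m < t)%N else false.

Definition nbelow (v : seq enat) (t : nat) : nat := count (below t) v.

Lemma below_eleb t e e' : eleb e e' -> below t e' -> below t e.
Proof. by case: e => [m|]; case: e' => [n|] //= le_mn /(leq_ltn_trans le_mn). Qed.

Lemma below_monotone t t' e : (t <= t')%N -> below t e -> below t' e.
Proof. by case: e => [m|] //= le_t lt_m; apply: leq_trans le_t. Qed.

Lemma below_eadd t p e : below t (eadd (Some p) e) = below (t - p) e.
Proof. by case: e => [m|] //=; rewrite ltn_subRL. Qed.

Lemma nbelow0 v : nbelow v 0 = 0%N.
Proof. by rewrite /nbelow (eq_count (a2 := pred0)) ?count_pred0 // => -[]. Qed.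

Lemma nbelow_le_nth v t i : sorted eleb v -> (i < size v)%N ->
  (nbelow v t <= i)%N = ~~ below t (nth None v i).
Proof.
elim: v i => [|e v IH] i //= sorted_ev.
have e_min : all (eleb e) v := order_path_min eleb_trans sorted_ev.
have none_below : ~~ below t e -> nbelow v t = 0%N.
  move=> not_e; apply/eqP; rewrite -leqn0 leqNgt -has_count; apply/hasPn => y y_v.
  by apply: contra not_e; apply: below_eleb; apply: (allP e_min).
rewrite /nbelow /= -/(nbelow v t); case: (boolP (below t e)) => [e_below|not_e].
  case: i => [|i] lt_i /=; first by rewrite e_below.
  by rewrite add1n ltnS IH //; apply: path_sorted sorted_ev.
rewrite none_below //; case: i => [|i] lt_i //=; apply/esym/negP => i_below.
by case/negP: not_e; apply: below_eleb i_below; apply: (allP e_min); apply: mem_nth.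
Qed.

Lemma nbelow_subadd_shift (w u : seq enat) a c :
  sorted eleb w -> sorted eleb u -> size w = size u ->
  (forall i, (i < size u)%N -> nth None w i = eadd (Some i) (nth None u i)) ->
  ((0 < size u)%N -> nth None u 0 = Some 0%N) ->
  (forall a' c', (a' + c' < a + c)%N ->
     (nbelow u (a' + c') <= nbelow u a' + nbelow u c')%N) ->
  (nbelow w (a + c) <= nbelow w a + nbelow w c)%N.
Proof.
move=> sorted_w sorted_u size_wu w_shift u0 IH.
have [->|a_gt0] := posnP a; first by rewrite nbelow0.
have [->|c_gt0] := posnP c; first by rewrite nbelow0 !addn0.
set P := nbelow w a; set Q := nbelow w c.
have [le_size|lt_PQ] := leqP (size w) (P + Q).
  exact: leq_trans (count_size _ _) le_size.
have w0 : nth None w 0 = Some 0%N by rewrite w_shift ?u0 // -size_wu (leq_ltn_trans _ lt_PQ).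
have nbelow_pos t : (0 < t)%N -> (0 < nbelow w t)%N.
  by move=> t_gt0; rewrite lt0n -leqn0 nbelow_le_nth ?w0 //= ?negbK // (leq_ltn_trans _ lt_PQ).
have P_gt0 := nbelow_pos a a_gt0; have Q_gt0 := nbelow_pos c c_gt0.
have shifted t i : (nbelow w t <= i)%N -> (i < size w)%N -> (nbelow u (t - i) <= i)%N.
  move=> le_i lt_i; rewrite nbelow_le_nth -?size_wu // -below_eadd -w_shift -?size_wu //.
  by rewrite -nbelow_le_nth.
have uP := shifted a P (leqnn P) (leq_ltn_trans (leq_addr Q P) lt_PQ).
have uQ := shifted c Q (leqnn Q) (leq_ltn_trans (leq_addl P Q) lt_PQ).
have uPQ : (nbelow u ((a - P) + (c - Q)) <= P + Q)%N.
  by apply: leq_trans (IH _ _ _) (leq_add uP uQ); lia.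
rewrite nbelow_le_nth // w_shift -?size_wu // below_eadd.
apply: contra (_ : ~~ below ((a - P) + (c - Q)) (nth None u (P + Q))).
  by apply: below_monotone; lia.
by rewrite -nbelow_le_nth // -size_wu.
Qed.

Lemma nbelow_exponents_subadd b S s a c : (1 < b)%N -> is_greedy b S [::] s ->
  let v := exponents b [::] s in (nbelow v (a + c) <= nbelow v a + nbelow v c)%N.
Proof.
move=> b_gt1; have b_gt0 := ltnW b_gt1.
have [n le_ac_n] : exists n, (a + c <= n)%N by exists (a + c)%N.
elim: n S s a c le_ac_n => [|n IH] S s a c le_ac_n greedy_s /=.
  by move: le_ac_n; rewrite leqn0 addn_eq0 => /andP[/eqP-> /eqP->]; rewrite nbelow0.
rewrite /nbelow !(count_exponents_residue _ _ _ b_gt0) -big_split /=; apply: leq_sum => r _.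
have greedy_r := greedy_residue r greedy_s.
have nil_r : {in [::], forall y, (y %% b)%Z = r} by [].
have greedy_q := greedy_divz b_gt1 (ltn_ord r) nil_r greedy_r.
apply: nbelow_subadd_shift (exponents_sorted greedy_r) (exponents_sorted greedy_q) _ _ _ _.
- by rewrite !size_exponents size_map.
- move=> i; rewrite size_exponents size_map => lt_i.
  by apply: (nth_exponents_divz (r := r)) => // y; rewrite mem_filter => /andP[/eqP].
- by move=> s_gt0; rewrite nth_exponents -?(size_exponents b [::]) // take0.
- by move=> a' c' lt_ac; apply: (IH _ _ _ _ _ greedy_q); rewrite -ltnS (leq_trans lt_ac).
Qed.

Lemma exists_ele_min (S : int -> Prop) (f : int -> enat) : (exists x, S x) ->
  exists x, S x /\ forall y, S y -> ele (f x) (f y).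
Proof.
move=> [x0 Sx0]; case: (classic (exists y n, S y /\ f y = Some n)); last first.
  move=> no_finite; exists x0; split=> // y Sy.
  case fy: (f y) => [m|]; last by case: (f x0).
  by case: no_finite; exists y, m.
move=> [y [n [Sy fy]]]; elim/ltn_ind: n y Sy fy => n IH y Sy fy.
case: (classic (exists y' m, S y' /\ f y' = Some m /\ (m < n)%N)).
  by move=> [y' [m [Sy' [fy' lt_mn]]]]; apply: IH fy'.
move=> no_smaller; exists y; split=> // y' Sy'; rewrite fy.
case fy': (f y') => [m|] //=; rewrite leqNgt; apply/negP => lt_mn.
by apply: no_smaller; exists y', m.
Qed.

Definition min_next (b : nat) (S : int -> Prop) (pre : seq int) : int :=
  epsilon (inhabits 0%R)
    (fun x => S x /\ forall y, S y -> ele (ordsum_seq b pre x) (ordsum_seq b pre y)).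

Lemma min_nextP b S pre : (exists x, S x) ->
  S (min_next b S pre) /\
  forall y, S y -> ele (ordsum_seq b pre (min_next b S pre)) (ordsum_seq b pre y).
Proof. by move=> S_ne; apply: (epsilon_spec _ _ (exists_ele_min (ordsum_seq b pre) S_ne)). Qed.

Fixpoint greedy_prefix (b : nat) (S : int -> Prop) (n : nat) : seq int :=
  if n is n'.+1 then rcons (greedy_prefix b S n') (min_next b S (greedy_prefix b S n'))
  else [::].

Lemma exists_bordering S b : (exists x, S x) -> exists a, is_bordering S b a.
Proof.
move=> S_ne; pose a n := min_next b S (greedy_prefix b S n).
have prefixE n : mkseq a n = greedy_prefix b S n by elim: n => //= n IH; rewrite mkseqS IH.
exists a; split=> [i|i _ x Sx]; first by case: (min_nextP b (greedy_prefix b S i) S_ne).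
by rewrite !ordsumE prefixE; apply: (min_nextP b (greedy_prefix b S i) S_ne).2.
Qed.

Lemma some_borderingP S b : (exists x, S x) -> is_bordering S b (some_bordering S b).
Proof. by move=> S_ne; apply: epsilon_spec; apply: exists_bordering. Qed.

Lemma bordering_min S b a i x : is_bordering S b a -> S x ->
  ele (ordsum_seq b (mkseq a i) (a i)) (ordsum_seq b (mkseq a i) x).
Proof.
case: i => [|i] [_ a_min] Sx; first exact: leqnn.
by have := a_min i.+1 isT x Sx; rewrite !ordsumE.
Qed.

Lemma is_greedyP b S pre s :
  (forall i, (i < size s)%N -> S (nth 0%R s i) /\
     forall y, S y -> ele (ordsum_seq b (pre ++ take i s) (nth 0%R s i))
                          (ordsum_seq b (pre ++ take i s) y)) ->
  is_greedy b S pre s.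
Proof.
elim: s pre => [|x s IH] pre //= greedy_nth; split.
  by have := greedy_nth 0%N isT; rewrite cats0.
by apply: IH => i lt_i; have := greedy_nth i.+1 lt_i; rewrite /= cat_rcons.
Qed.

Lemma take_mkseq T (f : nat -> T) i n : (i <= n)%N -> take i (mkseq f n) = mkseq f i.
Proof. by move=> le_in; rewrite /mkseq -map_take take_iota (minn_idPl le_in). Qed.

Lemma bordering_greedy S b a n : is_bordering S b a -> is_greedy b S [::] (mkseq a n).
Proof.
move=> a_ord; apply: is_greedyP => i; rewrite size_mkseq => lt_in.
rewrite (nth_mkseq 0%R a lt_in) take_mkseq ?(ltnW lt_in) //.
rewrite cat0s; split=> [|y Sy]; [exact: a_ord.1 | exact (bordering_min i a_ord Sy)].
Qed.

Lemma alpha_nth S b j n : (j < n)%N ->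
  alpha S b j = nth None (exponents b [::] (mkseq (some_bordering S b) n)) j.
Proof.
move=> lt_jn; rewrite nth_exponents ?size_mkseq //.
by rewrite take_mkseq ?(ltnW lt_jn) // (nth_mkseq 0%R _ lt_jn) /alpha ordsumE.
Qed.

Lemma alpha_min S b j x : (exists y, S y) -> S x ->
  ele (alpha S b j) (ordsum_seq b (mkseq (some_bordering S b) j) x).
Proof.
by move=> S_ne Sx; rewrite /alpha ordsumE; apply: bordering_min (some_borderingP b S_ne) Sx.
Qed.

Lemma exists_fresh_image (T U : eqType) (f : T -> U) (s A : seq T) :
  uniq s -> {in s &, injective f} -> (size A < size s)%N ->
  exists2 x, x \in s & f x \notin map f A.
Proof.
move=> uniq_s inj_f lt_As; case: (boolP (all (fun x => f x \in map f A) s)); last first.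
  by case/allPn => x x_s fx_A; exists x.
move=> /allP all_in; have : (size (map f s) <= size (map f A))%N.
  apply: uniq_leq_size; first by rewrite map_inj_in_uniq.
  by move=> _ /mapP[x x_s ->]; apply: all_in.
by rewrite !size_map leqNgt lt_As.
Qed.

Lemma alpha_eq0 S (b : nat) j s0 : uniq s0 -> (j < size s0)%N -> {in s0, forall x, S x} ->
  {in s0 &, injective (fun x => (x %% b)%Z)} -> alpha S b j = Some 0%N.
Proof.
move=> uniq_s0 lt_j s0_S inj_mod; set A := mkseq (some_bordering S b) j.
have [|x x_s0 x_fresh] := exists_fresh_image (A := A) uniq_s0 inj_mod; first by rewrite size_mkseq.
have S_ne : exists y, S y by exists x; apply: s0_S.
have := alpha_min b j S_ne (s0_S x x_s0); rewrite -/A ordsum_seq_eq0.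
  by case: alpha => [[|n]|].
move=> y y_A; apply: ordb_ndvd; rewrite -eqz_mod_dvd.
by apply: contraNneq x_fresh => ->; apply: map_f.
Qed.

Lemma alpha_finite S b j s0 : (1 < b)%N -> uniq s0 -> (j < size s0)%N ->
  {in s0, forall x, S x} -> exists n, alpha S b j = Some n.
Proof.
move=> b_gt1 uniq_s0 lt_j s0_S; set A := mkseq (some_bordering S b) j.
have [|x x_s0 x_fresh] := exists_fresh_image (f := id) (A := A) uniq_s0 (in2W (@inj_id _)).
  by rewrite size_mkseq.
have S_ne : exists y, S y by exists x; apply: s0_S.
have [|n sum_n] := ordsum_seq_finite (b := b) (s := A) (x := x).
  move=> y y_A; apply: ordb_finite => //; rewrite subr_eq0.
  by apply: contraNneq x_fresh => ->; rewrite map_id.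
by have := alpha_min b j S_ne (s0_S x x_s0); rewrite -/A sum_n; case: alpha => [m|] //; exists m.
Qed.

Lemma alpha_superadd S b l m nl nm : (1 < b)%N -> (exists x, S x) ->
  alpha S b l = Some nl -> alpha S b m = Some nm -> ele (Some (nl + nm)%N) (alpha S b (l + m)).
Proof.
move=> b_gt1 S_ne alpha_l alpha_m.
have greedy := bordering_greedy (l + m).+1 (some_borderingP b S_ne).
set v := exponents b [::] (mkseq (some_bordering S b) (l + m).+1).
have sorted_v := exponents_sorted greedy.
have size_v : size v = (l + m).+1 by rewrite size_exponents size_mkseq.
have nbelow_le j nj : (j <= l + m)%N -> alpha S b j = Some nj -> (nbelow v nj <= j)%N.
  by move=> le_j alpha_j; rewrite nbelow_le_nth ?size_v // -alpha_nth // alpha_j /= ltnn.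
have := leq_trans (nbelow_exponents_subadd nl nm b_gt1 greedy)
  (leq_add (nbelow_le l nl (leq_addr _ _) alpha_l) (nbelow_le m nm (leq_addl _ _) alpha_m)).
by rewrite nbelow_le_nth ?size_v // -alpha_nth //; case: alpha => [n|] //=; rewrite -leqNgt.
Qed.

Section FactorialTerms.

Variables (S : int -> Prop) (T : nat -> Prop) (s0 : seq int).
Hypotheses (S_ne : exists x, S x) (uniq_s0 : uniq s0) (s0_S : {in s0, forall x, S x}).

Lemma gfact_term_in j b : T b -> gfact_term S T j b = epow b (alpha S b j).
Proof. by rewrite /gfact_term; case: excluded_middle_informative. Qed.

Lemma gfact_term_notin j b : ~ T b -> gfact_term S T j b = 1%N.
Proof. by rewrite /gfact_term; case: excluded_middle_informative. Qed.

Lemma epow1 e : epow 1 e = 1%N.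
Proof. by case: e => [n|] //=; rewrite exp1n. Qed.

Lemma modz0_inj : {in s0 &, injective (fun x => (x %% 0%N)%Z)}.
Proof. by move=> x y _ _; rewrite !modz0. Qed.

Lemma gfact_term_gt0 j b : (j < size s0)%N -> (0 < gfact_term S T j b)%N.
Proof.
move=> lt_j; case: (classic (T b)) => [T_b|T_b]; last by rewrite !gfact_term_notin.
rewrite !gfact_term_in // {T_b}.
case: b => [|[|b]]; first by rewrite (alpha_eq0 uniq_s0 lt_j s0_S modz0_inj).
  by rewrite epow1.
by have [n ->] := alpha_finite (b := b.+2) isT uniq_s0 lt_j s0_S; rewrite expn_gt0.
Qed.

Lemma gfact_term_dvd l m b : (l + m < size s0)%N ->
  (gfact_term S T l b * gfact_term S T m b %| gfact_term S T (l + m) b)%N.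
Proof.
move=> lt_lm; have lt_l := leq_ltn_trans (leq_addr m l) lt_lm.
have lt_m := leq_ltn_trans (leq_addl l m) lt_lm.
case: (classic (T b)) => [T_b|T_b]; last by rewrite !gfact_term_notin.
rewrite !gfact_term_in // {T_b}.
case: b => [|[|b]]; first by rewrite !(alpha_eq0 uniq_s0 _ s0_S modz0_inj).
  by rewrite !epow1.
have [nl alpha_l] := alpha_finite (b := b.+2) isT uniq_s0 lt_l s0_S.
have [nm alpha_m] := alpha_finite (b := b.+2) isT uniq_s0 lt_m s0_S.
have [n alpha_lm] := alpha_finite (b := b.+2) isT uniq_s0 lt_lm s0_S.
have := alpha_superadd (b := b.+2) isT S_ne alpha_l alpha_m; rewrite alpha_l alpha_m alpha_lm /=.
by rewrite -expnD; apply: dvdn_exp2l.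
Qed.

Lemma gfact_term_large j b : (j < size s0)%N -> ((2 * \max_(x <- s0) `|x|).+1 <= b)%N ->
  gfact_term S T j b = 1%N.
Proof.
move=> lt_j large_b; case: (classic (T b)) => [T_b|T_b]; last by rewrite !gfact_term_notin.
rewrite !gfact_term_in // {T_b}.
suff -> : alpha S b j = Some 0%N by [].
apply: alpha_eq0 uniq_s0 lt_j s0_S _ => x y x_s0 y_s0 /eqP; rewrite eqz_mod_dvd dvdzE => dvd_xy.
apply/eqP; rewrite -subr_eq0 -absz_eq0; apply: contraTT dvd_xy; rewrite -lt0n => xy_gt0.
rewrite gtnNdvd //; apply: leq_trans large_b.
have := @leq_bigmax_seq _ s0 xpredT absz x x_s0 isT.
have := @leq_bigmax_seq _ s0 xpredT absz y y_s0 isT.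
have := leqD_dist x 0 y; rewrite subr0 sub0r abszN => le_dist le_y le_x.
by rewrite ltnS mul2n -addnn (leq_trans le_dist) // leq_add.
Qed.

End FactorialTerms.

Lemma gfact_prod S T j N : (forall b, (N <= b)%N -> gfact_term S T j b = 1%N) ->
  gfact S T j = (\prod_(b < N) gfact_term S T j b)%N.
Proof.
have prod_widen N1 N2 : (forall b, (N1 <= b)%N -> gfact_term S T j b = 1%N) -> (N1 <= N2)%N ->
    (\prod_(b < N2) gfact_term S T j b = \prod_(b < N1) gfact_term S T j b)%N.
  move=> one_above le_N12; rewrite -!(big_mkord xpredT) (big_cat_nat (leq0n N1) le_N12) /=.
  rewrite -[RHS]muln1; congr (_ * _)%N.
  by rewrite big_nat_cond big1 // => b /andP[/andP[/one_above]].
move=> one_above; rewrite /gfact; case: excluded_middle_informative => [supp|]; last first.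
  by case; exists N.
have := epsilon_spec (inhabits 0%N) _ supp; set N' := epsilon _ _ => one_above'.
by rewrite -(prod_widen _ _ one_above' (leq_maxr N N')) (prod_widen _ _ one_above (leq_maxl N N')).
Qed.

Lemma dvdn_prod_mul I r (P : pred I) (F G H : I -> nat) :
  (forall i, P i -> F i * G i %| H i)%N ->
  (\prod_(i <- r | P i) F i * \prod_(i <- r | P i) G i %| \prod_(i <- r | P i) H i)%N.
Proof.
move=> dvd_FGH; rewrite -big_split /=.
by apply: (big_ind2 (fun x y => x %| y)%N) => // x1 x2 y1 y2; apply: dvdn_mul.
Qed.

Theorem theorem3p14 (S : int -> Prop) (T : nat -> Prop) (k l : nat) :
  (exists x, S x) -> (l <= k)%N -> lt_card k S ->
  (0 < gfact S T l * gfact S T (k - l))%N /\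
  exists m : nat, (0 < m)%N /\ gfact S T k = (m * (gfact S T l * gfact S T (k - l)))%N.
Proof.
move=> S_ne le_lk [s0 [uniq_s0 [size_s0 s0_S]]].
have lt_s0 j : (j <= k)%N -> (j < size s0)%N by rewrite size_s0 ltnS.
set N := (2 * \max_(x <- s0) `|x|).+1.
have gfactE j : (j <= k)%N -> gfact S T j = (\prod_(b < N) gfact_term S T j b)%N.
  by move=> le_jk; apply: gfact_prod => b; apply: gfact_term_large uniq_s0 s0_S _ _ (lt_s0 _ le_jk).
have gfact_gt0 j : (j <= k)%N -> (0 < gfact S T j)%N.
  move=> le_jk; rewrite gfactE // prodn_gt0 // => b.
  exact: gfact_term_gt0 uniq_s0 s0_S _ _ (lt_s0 _ le_jk).
have le_klk : (k - l <= k)%N := leq_subr l k.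
have dvd_k : (gfact S T l * gfact S T (k - l) %| gfact S T k)%N.
  rewrite !gfactE //; apply: dvdn_prod_mul => b _.
  rewrite -{2}(subnKC le_lk).
  by apply: gfact_term_dvd S_ne uniq_s0 s0_S _ _ _ _; rewrite subnKC ?lt_s0.
have denom_gt0 : (0 < gfact S T l * gfact S T (k - l))%N by rewrite muln_gt0 !gfact_gt0.
split=> //; exists (gfact S T k %/ (gfact S T l * gfact S T (k - l)))%N.
by rewrite divnK // divn_gt0 // dvdn_leq ?gfact_gt0.
Qed.
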